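(* Let $G$ be a locally compact group, $X$ a proper $G$-space and $Y$ any $G$-space. Let $C\subset X$ be a closed small subset of $X$ meeting each $G$-orbit of $X$ in exactly one point. Then every continuous map $f:C\to Y$ such that $G_c\subset G_{f(c)}$ for all $c\in C$ has a unique extension to a continuous equivariant map $F:X\to Y$.
   Context: All spaces are completely regular Hausdorff. A $G$-space is a space $X$ with a continuous action $G\times X\to X$, $(g,x)\mapsto gx$, with $ex=x$ and $(gh)x=g(hx)$. $G_x=\{g\in G\mid gx=x\}$ is the stabilizer of $x$. A map $F$ is equivariant if $F(gx)=gF(x)$. For $U,V\subset X$ the transporter is $\langle U,V\rangle=\{g\in G\mid gU\cap V\neq\emptyset\}$; $U$ and $V$ are thin relative to each other if $\langle U,V\rangle$ has compact closure in $G$. A subset $U\subset X$ is small if every point of $X$ has a neighborhood thin relative to $U$. For $G$ locally compact, a $G$-space $X$ is proper if every point of $X$ has a small neighborhood. *)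

From Stdlib Require Import Reals List.
Open Scope R_scope.

Section Topology.

Definition is_topology {X : Type} (op : (X -> Prop) -> Prop) : Prop :=
  op (fun _ => True) /\
  (forall U V, op U -> op V -> op (fun x => U x /\ V x)) /\
  (forall (I : Type) (F : I -> X -> Prop),
      (forall i, op (F i)) -> op (fun x => exists i, F i x)).

Definition closed {X : Type} (op : (X -> Prop) -> Prop) (A : X -> Prop) : Prop :=
  op (fun x => ~ A x).

Definition continuous {A B : Type} (opA : (A -> Prop) -> Prop)
  (opB : (B -> Prop) -> Prop) (f : A -> B) : Prop :=
  forall V, opB V -> opA (fun a => V (f a)).

Definition prod_open {A B : Type} (opA : (A -> Prop) -> Prop)
  (opB : (B -> Prop) -> Prop) (W : A * B -> Prop) : Prop :=
  forall a b, W (a, b) -> exists U V, opA U /\ opB V /\ U a /\ V b /\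
    forall a' b', U a' -> V b' -> W (a', b').

Definition subspace_open {X : Type} (op : (X -> Prop) -> Prop) (C : X -> Prop)
  (W : {x | C x} -> Prop) : Prop :=
  exists U, op U /\ forall c, W c <-> U (proj1_sig c).

Definition R_open (U : R -> Prop) : Prop :=
  forall x, U x -> exists eps, eps > 0 /\ forall y, Rabs (y - x) < eps -> U y.

Definition hausdorff {X : Type} (op : (X -> Prop) -> Prop) : Prop :=
  forall x y : X, x <> y -> exists U V, op U /\ op V /\ U x /\ V y /\
    forall z, ~ (U z /\ V z).

Definition completely_regular {X : Type} (op : (X -> Prop) -> Prop) : Prop :=
  forall (A : X -> Prop) (x : X), closed op A -> ~ A x ->
    exists g : X -> R, continuous op R_open g /\ g x = 0 /\
      forall a, A a -> g a = 1.

Definition crh_space {X : Type} (op : (X -> Prop) -> Prop) : Prop :=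
  is_topology op /\ hausdorff op /\ completely_regular op.

Definition closure {X : Type} (op : (X -> Prop) -> Prop) (A : X -> Prop) (x : X)
  : Prop := forall U, op U -> U x -> exists y, U y /\ A y.

Definition compact {X : Type} (op : (X -> Prop) -> Prop) (K : X -> Prop) : Prop :=
  forall (I : Type) (U : I -> X -> Prop), (forall i, op (U i)) ->
    (forall x, K x -> exists i, U i x) ->
    exists l : list I, forall x, K x -> exists i, In i l /\ U i x.

Definition neighborhood {X : Type} (op : (X -> Prop) -> Prop) (N : X -> Prop)
  (x : X) : Prop := exists U, op U /\ U x /\ forall y, U y -> N y.

Definition locally_compact {X : Type} (op : (X -> Prop) -> Prop) : Prop :=
  forall x, exists K, neighborhood op K x /\ compact op K.

End Topology.

Section Groups.

Definition is_group {G : Type} (mul : G -> G -> G) (inv : G -> G) (e : G) : Prop :=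
  (forall a b c, mul a (mul b c) = mul (mul a b) c) /\
  (forall a, mul e a = a) /\ (forall a, mul a e = a) /\
  (forall a, mul (inv a) a = e) /\ (forall a, mul a (inv a) = e).

Definition topological_group {G : Type} (opG : (G -> Prop) -> Prop)
  (mul : G -> G -> G) (inv : G -> G) (e : G) : Prop :=
  is_group mul inv e /\
  continuous (prod_open opG opG) opG (fun p => mul (fst p) (snd p)) /\
  continuous opG opG inv.

Definition G_space {G X : Type} (opG : (G -> Prop) -> Prop) (mul : G -> G -> G)
  (e : G) (opX : (X -> Prop) -> Prop) (act : G -> X -> X) : Prop :=
  (forall x, act e x = x) /\
  (forall g h x, act (mul g h) x = act g (act h x)) /\
  continuous (prod_open opG opX) opX (fun p => act (fst p) (snd p)).

Definition stabilizer {G X : Type} (act : G -> X -> X) (x : X) (g : G) : Prop :=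
  act g x = x.

Definition equivariant {G X Y : Type} (actX : G -> X -> X) (actY : G -> Y -> Y)
  (F : X -> Y) : Prop := forall g x, F (actX g x) = actY g (F x).

Definition transporter {G X : Type} (act : G -> X -> X) (U V : X -> Prop)
  (g : G) : Prop := exists u, U u /\ V (act g u).

Definition thin {G X : Type} (opG : (G -> Prop) -> Prop) (act : G -> X -> X)
  (U V : X -> Prop) : Prop := compact opG (closure opG (transporter act U V)).

Definition small {G X : Type} (opG : (G -> Prop) -> Prop)
  (opX : (X -> Prop) -> Prop) (act : G -> X -> X) (U : X -> Prop) : Prop :=
  forall x, exists N, neighborhood opX N x /\ thin opG act N U.

Definition proper_G_space {G X : Type} (opG : (G -> Prop) -> Prop)
  (opX : (X -> Prop) -> Prop) (act : G -> X -> X) : Prop :=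
  forall x, exists N, neighborhood opX N x /\ small opG opX act N.

End Groups.

(* Since C meets each orbit exactly once, an equivariant extension is forced
   to be F x = g⁻¹·f(gx) for any g with gx ∈ C; this does not depend on g
   because two such g differ by an element of the stabilizer of gx, which fixes
   f(gx).  For continuity at x₀, take a neighbourhood N of x₀ thin relative to
   C: every g with gy ∈ C for some y ∈ N lies in the compact closure K of
   ⟨N, C⟩.  Continuity of the actions (or, off C, closedness of C) gives for
   each g ∈ K neighbourhoods O of g and W of x₀ such that F maps every x ∈ W
   with hx ∈ C for some h ∈ O into a prescribed open set; finitely many O
   cover K, and the intersection of the corresponding W does the job. *)
From Stdlib Require Import Reals List.
From Stdlib Require Import Classical ClassicalEpsilon FunctionalExtensionality
  PropExtensionality ProofIrrelevance.

Lemma open_ext {X : Type} (op : (X -> Prop) -> Prop) (U V : X -> Prop) :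
  op U -> (forall x, U x <-> V x) -> op V.
Proof.
  intros HU HUV. replace V with U; auto.
  apply functional_extensionality; intro x; apply propositional_extensionality; auto.
Qed.

Lemma open_list_inter {X I : Type} (op : (X -> Prop) -> Prop) (W : I -> X -> Prop) :
  is_topology op -> (forall i, op (W i)) ->
  forall l : list I, op (fun x => forall i, In i l -> W i x).
Proof.
  intros [Htop [Hinter _]] HW l. induction l as [|a l IH].
  - apply (open_ext op (fun _ => True)); auto. intros x; split; auto. intros _ i [].
  - apply (open_ext op (fun x => W a x /\ (forall i, In i l -> W i x))).
    + apply Hinter; auto.
    + intros x; split.
      * intros [Ha Hl] i [<-|Hi]; auto.
      * intros H; split; [apply H; simpl; auto|].
        intros i Hi; apply H; simpl; auto.
Qed.

Lemma open_of_locally_open {X : Type} (op : (X -> Prop) -> Prop) (P : X -> Prop) :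
  is_topology op ->
  (forall x, P x -> exists W, op W /\ W x /\ forall y, W y -> P y) -> op P.
Proof.
  intros [_ [_ Hunion]] Hloc.
  apply (open_ext op (fun x => exists i : {W | op W /\ forall y, W y -> P y},
                          proj1_sig i x)).
  - apply Hunion. intros i; exact (proj1 (proj2_sig i)).
  - intros x; split.
    + intros [[W [HW HWP]] HWx]; auto.
    + intros Hx. destruct (Hloc x Hx) as [W [HW [HWx HWP]]].
      exists (exist _ W (conj HW HWP)); exact HWx.
Qed.

Section GroupAction.

Variables (G X : Type) (mul : G -> G -> G) (inv : G -> G) (e : G).
Variable act : G -> X -> X.
Hypothesis Hgrp : is_group mul inv e.
Hypothesis act_e : forall x, act e x = x.
Hypothesis act_mul : forall g h x, act (mul g h) x = act g (act h x).

Lemma mul_inv_cancel_l (a b : G) : mul (inv a) (mul a b) = b.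
Proof.
  destruct Hgrp as [Hassoc [Hel [_ [Hil _]]]].
  rewrite Hassoc, Hil, Hel; reflexivity.
Qed.

Lemma inv_e : inv e = e.
Proof.
  destruct Hgrp as [_ [Hel [_ [_ Hir]]]].
  rewrite <- (Hel (inv e)), Hir; reflexivity.
Qed.

Lemma inv_mul_inv (g h : G) : inv (mul h (inv g)) = mul g (inv h).
Proof.
  destruct Hgrp as [Hassoc [Hel [Her [Hil Hir]]]].
  assert (Hprod : mul (mul h (inv g)) (mul g (inv h)) = e).
  { rewrite <- Hassoc, (Hassoc (inv g)), Hil, Hel, Hir; reflexivity. }
  rewrite <- (mul_inv_cancel_l (mul h (inv g)) (mul g (inv h))), Hprod, Her.
  reflexivity.
Qed.

Lemma act_inv_l (g : G) (x : X) : act (inv g) (act g x) = x.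
Proof.
  destruct Hgrp as [_ [_ [_ [Hil _]]]].
  rewrite <- act_mul, Hil, act_e; reflexivity.
Qed.

End GroupAction.

Lemma equivariant_eq_on_transversal {G X Y : Type} (mul : G -> G -> G)
  (inv : G -> G) (e : G) (actX : G -> X -> X) (actY : G -> Y -> Y)
  (C : X -> Prop) (F F' : X -> Y) :
  is_group mul inv e ->
  (forall x, actX e x = x) -> (forall g h x, actX (mul g h) x = actX g (actX h x)) ->
  (forall x, exists g, C (actX g x)) ->
  equivariant actX actY F -> equivariant actX actY F' ->
  (forall c, C c -> F c = F' c) -> F = F'.
Proof.
  intros Hgrp HXe HXmul Horb HF HF' Heq.
  apply functional_extensionality; intro x.
  destruct (Horb x) as [g Hg].
  rewrite <- (act_inv_l G X mul inv e actX Hgrp HXe HXmul g x), HF, HF', Heq; auto.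
Qed.

Section Extension.

Variables (G : Type) (opG : (G -> Prop) -> Prop).
Variables (mul : G -> G -> G) (inv : G -> G) (e : G).
Variables (X : Type) (opX : (X -> Prop) -> Prop) (actX : G -> X -> X).
Variables (Y : Type) (opY : (Y -> Prop) -> Prop) (actY : G -> Y -> Y).
Hypothesis Hgrp : is_group mul inv e.
Hypothesis HGtop : is_topology opG.
Hypothesis inv_cont : continuous opG opG inv.
Hypothesis HXtop : is_topology opX.
Hypothesis actX_e : forall x, actX e x = x.
Hypothesis actX_mul : forall g h x, actX (mul g h) x = actX g (actX h x).
Hypothesis actX_cont :
  continuous (prod_open opG opX) opX (fun p => actX (fst p) (snd p)).
Hypothesis actY_e : forall y, actY e y = y.
Hypothesis actY_mul : forall g h y, actY (mul g h) y = actY g (actY h y).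
Hypothesis actY_cont :
  continuous (prod_open opG opY) opY (fun p => actY (fst p) (snd p)).

Variable C : X -> Prop.
Hypothesis C_closed : closed opX C.
Hypothesis C_small : small opG opX actX C.
Hypothesis C_transversal : forall x, exists! c, C c /\ exists g, actX g x = c.
Variable f : {x : X | C x} -> Y.
Hypothesis f_cont : continuous (subspace_open opX C) opY f.
Hypothesis f_stab : forall (c : {x : X | C x}) g,
  stabilizer actX (proj1_sig c) g -> stabilizer actY (f c) g.

Let actX_inv_l (g : G) (x : X) : actX (inv g) (actX g x) = x :=
  act_inv_l G X mul inv e actX Hgrp actX_e actX_mul g x.

Lemma f_exist_eq (a b : X) (pa : C a) (pb : C b) :
  a = b -> f (exist C a pa) = f (exist C b pb).
Proof. intros <-. rewrite (proof_irrelevance _ pa pb); reflexivity. Qed.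

Lemma transversal_point_unique (g h : G) (x : X) :
  C (actX g x) -> C (actX h x) -> actX g x = actX h x.
Proof.
  intros Hg Hh. destruct (C_transversal x) as [c [_ Hc]].
  transitivity c; [symmetry|]; apply Hc; eauto.
Qed.

Definition transversal_shift (x : X) : {g : G | C (actX g x)}.
Proof.
  apply constructive_indefinite_description.
  destruct (C_transversal x) as [c [[Hc [g <-]] _]]. exists g; exact Hc.
Defined.

Definition extension (x : X) : Y :=
  actY (inv (proj1_sig (transversal_shift x)))
       (f (exist C _ (proj2_sig (transversal_shift x)))).

Lemma extension_at (x : X) (h : G) (p : C (actX h x)) :
  extension x = actY (inv h) (f (exist C _ p)).
Proof.
  unfold extension. destruct (transversal_shift x) as [g pg]; simpl.
  assert (Hgh : actX g x = actX h x) by (apply transversal_point_unique; auto).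
  assert (Hstab : stabilizer actX (actX h x) (mul h (inv g))).
  { unfold stabilizer. rewrite actX_mul, <- Hgh at 1.
    rewrite actX_inv_l; reflexivity. }
  apply (f_stab (exist _ _ p)) in Hstab; unfold stabilizer in Hstab; simpl in Hstab.
  rewrite (f_exist_eq _ _ pg p Hgh).
  set (y := f (exist C _ p)) in *.
  rewrite <- Hstab at 2. rewrite <- actY_mul, (mul_inv_cancel_l _ _ _ _ Hgrp).
  reflexivity.
Qed.

Lemma extension_equivariant : equivariant actX actY extension.
Proof.
  intros g x. destruct (transversal_shift x) as [h ph].
  assert (p : C (actX (mul h (inv g)) (actX g x))).
  { rewrite actX_mul, actX_inv_l; exact ph. }
  rewrite (extension_at _ _ p), (extension_at x h ph), <- actY_mul.
  rewrite (inv_mul_inv _ _ _ _ Hgrp).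
  f_equal. apply f_exist_eq.
  rewrite actX_mul, actX_inv_l; reflexivity.
Qed.

Lemma extension_extends (c : {x : X | C x}) : extension (proj1_sig c) = f c.
Proof.
  destruct c as [c pc]; simpl.
  assert (p : C (actX e c)) by (rewrite actX_e; exact pc).
  rewrite (extension_at c e p), (inv_e _ _ _ _ Hgrp), actY_e.
  apply f_exist_eq, actX_e.
Qed.

Definition controls (V : Y -> Prop) (O : G -> Prop) (W : X -> Prop) : Prop :=
  forall h x, O h -> W x -> C (actX h x) -> V (extension x).

Lemma controls_near (V : Y -> Prop) (x0 : X) (g : G) :
  opY V -> V (extension x0) ->
  exists O W, opG O /\ opX W /\ O g /\ W x0 /\ controls V O W.
Proof.
  intros HV HVx0. destruct (classic (C (actX g x0))) as [p | np].
  - rewrite (extension_at x0 g p) in HVx0.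
    destruct (actY_cont V HV (inv g) (f (exist C _ p)) HVx0)
      as [A [B [HA [HB [HAg [HBf HAB]]]]]].
    destruct (f_cont _ HB) as [U [HU HUB]].
    assert (HUg : U (actX g x0)) by exact (proj1 (HUB (exist C _ p)) HBf).
    destruct (actX_cont U HU g x0 HUg) as [O [W [HO [HW [HOg [HWx HOW]]]]]].
    exists (fun h => O h /\ A (inv h)), W.
    split; [apply HGtop; auto|]. repeat split; auto.
    intros h x [Hh HAh] Hx q. rewrite (extension_at x h q).
    apply HAB; auto. apply (HUB (exist C _ q)). exact (HOW h x Hh Hx).
  - destruct (actX_cont _ C_closed g x0 np) as [O [W [HO [HW [HOg [HWx HOW]]]]]].
    exists O, W. repeat split; auto.
    intros h x Hh Hx q. exfalso. exact (HOW h x Hh Hx q).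
Qed.

Lemma extension_locally_in (V : Y -> Prop) (x0 : X) :
  opY V -> V (extension x0) ->
  exists W, opX W /\ W x0 /\ forall y, W y -> V (extension y).
Proof.
  intros HV HVx0.
  destruct (C_small x0) as [N [[U0 [HU0 [HU0x HU0N]]] Hthin]].
  set (I := {p : (G -> Prop) * (X -> Prop) |
              opG (fst p) /\ opX (snd p) /\ snd p x0 /\ controls V (fst p) (snd p)}).
  destruct (Hthin I (fun i => fst (proj1_sig i))) as [l Hl].
  - intros i; exact (proj1 (proj2_sig i)).
  - intros g _.
    destruct (controls_near V x0 g HV HVx0) as [O [W [HO [HW [HOg [HWx HOW]]]]]].
    exists (exist _ (O, W) (conj HO (conj HW (conj HWx HOW)))). exact HOg.
  - exists (fun x => U0 x /\ forall i, In i l -> snd (proj1_sig i) x).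
    split; [|split].
    + apply HXtop; auto.
      apply (open_list_inter opX (fun i : I => snd (proj1_sig i))); auto.
      intros i; exact (proj1 (proj2 (proj2_sig i))).
    + split; auto. intros i _. exact (proj1 (proj2 (proj2 (proj2_sig i)))).
    + intros y [Hy Hyl]. destruct (transversal_shift y) as [g pg].
      assert (Hg : closure opG (transporter actX N C) g).
      { intros U _ HUg. exists g. split; auto. exists y. auto. }
      destruct (Hl g Hg) as [i [Hin Hig]].
      exact (proj2 (proj2 (proj2 (proj2_sig i))) g y Hig (Hyl i Hin) pg).
Qed.

Lemma extension_continuous : continuous opX opY extension.
Proof.
  intros V HV. apply open_of_locally_open; auto.
  intros x Hx. exact (extension_locally_in V x HV Hx).
Qed.

End Extension.

Theorem corollary4p3
  (G : Type) (opG : (G -> Prop) -> Prop)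
  (mul : G -> G -> G) (inv : G -> G) (e : G)
  (X : Type) (opX : (X -> Prop) -> Prop) (actX : G -> X -> X)
  (Y : Type) (opY : (Y -> Prop) -> Prop) (actY : G -> Y -> Y)
  (HG : crh_space opG) (HGtop : topological_group opG mul inv e)
  (HGlc : locally_compact opG)
  (HX : crh_space opX) (HXact : G_space opG mul e opX actX)
  (HXprop : proper_G_space opG opX actX)
  (HY : crh_space opY) (HYact : G_space opG mul e opY actY)
  (C : X -> Prop) (HCcl : closed opX C) (HCsmall : small opG opX actX C)
  (HCorb : forall x : X, exists! c : X, C c /\ exists g : G, actX g x = c)
  (f : {x : X | C x} -> Y)
  (Hf : continuous (subspace_open opX C) opY f)
  (Hstab : forall (c : {x : X | C x}) (g : G),
      stabilizer actX (proj1_sig c) g -> stabilizer actY (f c) g) :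
  exists! F : X -> Y,
    continuous opX opY F /\ equivariant actX actY F /\
    forall c : {x : X | C x}, F (proj1_sig c) = f c.
Proof.
  destruct HG as [HGt _], HX as [HXt _].
  destruct HGtop as [Hgrp [_ Hinv]].
  destruct HXact as [HXe [HXmul HXcont]], HYact as [HYe [HYmul HYcont]].
  set (F := extension G inv X actX Y actY C HCorb f).
  assert (HFeq : equivariant actX actY F) by (eapply extension_equivariant; eauto).
  assert (HFf : forall c, F (proj1_sig c) = f c) by (eapply extension_extends; eauto).
  exists F. split; [split; [|split]|]; auto.
  - eapply extension_continuous; eauto.
  - intros F' [_ [HF'eq HF'f]].
    apply (equivariant_eq_on_transversal mul inv e actX actY C); auto.
    + intros x. destruct (HCorb x) as [c [[Hc [g <-]] _]]. eauto.
    + intros c pc. exact (eq_trans (HFf (exist C c pc)) (eq_sym (HF'f (exist C c pc)))).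
Qed.
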